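(* Let $R_0$ be a commutative Noetherian ring. Let $R_0[\mathbb Q]=R_0[a_{ij},\ell_{ij}\ (1\le i\le 2,1\le j\le 3),\psi_{12},\psi_{13},\psi_{23},z_1,z_2]$ be a polynomial ring in these $17$ indeterminates and let $\mathbb Q$ be the complex over $R_0[\mathbb Q]$ described below. Let $R_0[\mathbb B]=R_0[u_{ij}\ (1\le i\le 2,1\le j\le 3),\pi_1,\pi_2,\pi_3,w_1,z_2]$ be a polynomial ring in these $11$ indeterminates and let $\mathbb B$ be the complex over $R_0[\mathbb B]$ described below. Then there is a surjective $R_0$-algebra homomorphism $\Phi:R_0[\mathbb Q]\to R_0[\mathbb B]$ such that the complexes $\mathbb Q\otimes_{R_0[\mathbb Q]}R_0[\mathbb B]$ and $\mathbb B$ are isomorphic.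
   Context: The complex $\mathbb Q$: $0\to R^2\xrightarrow{q_3}R^6\xrightarrow{q_2}R^5\xrightarrow{q_1}R$ (with $R=R_0[\mathbb Q]$). Write $A=(a_{ij})$, $L=(\ell_{ij})$ ($2\times 3$), $P=(\psi_{23},-\psi_{13},\psi_{12})^{\rm T}$, $N=\sum_{i=1}^3(a_{1i}\ell_{2i}-a_{2i}\ell_{1i})$. $q_1=[g_1\ g_2\ g_3\ g_4\ g_5]$ with $g_1=-\det\begin{bmatrix}\psi_{23}&-\psi_{13}&\psi_{12}\\ \ell_{11}&\ell_{12}&\ell_{13}\\ \ell_{21}&\ell_{22}&\ell_{23}\end{bmatrix}-z_2N-z_2z_1$, $g_2=P^{\rm T}A^{\rm T}\begin{bmatrix}\ell_{21}\\-\ell_{11}\end{bmatrix}-z_2(a_{12}a_{23}-a_{13}a_{22})+z_1\psi_{23}$, $g_3=P^{\rm T}A^{\rm T}\begin{bmatrix}\ell_{22}\\-\ell_{12}\end{bmatrix}+z_2(a_{11}a_{23}-a_{13}a_{21})-z_1\psi_{13}$, $g_4=P^{\rm T}A^{\rm T}\begin{bmatrix}\ell_{23}\\-\ell_{13}\end{bmatrix}-z_2(a_{11}a_{22}-a_{12}a_{21})+z_1\psi_{12}$, $g_5=-\det(AL^{\rm T})-z_1N-z_1^2$. $q_2$ ($5\times6$) has columns (rows 1 to 5): $C_1=(\psi_{12}a_{23}-\psi_{13}a_{22}+\psi_{23}a_{21},\ -\ell_{22}\psi_{12}-\ell_{23}\psi_{13}+z_2a_{21},\ \ell_{21}\psi_{12}-\ell_{23}\psi_{23}+z_2a_{22},\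 \ell_{21}\psi_{13}+\ell_{22}\psi_{23}+z_2a_{23},\ 0)$; $C_2=(-\psi_{12}a_{13}+\psi_{13}a_{12}-\psi_{23}a_{11},\ \psi_{12}\ell_{12}+\psi_{13}\ell_{13}-z_2a_{11},\ -\psi_{12}\ell_{11}+\psi_{23}\ell_{13}-z_2a_{12},\ -\psi_{13}\ell_{11}-\psi_{23}\ell_{12}-z_2a_{13},\ 0)$; $C_3=(z_1,\ \ell_{12}\ell_{23}-\ell_{13}\ell_{22},\ -(\ell_{11}\ell_{23}-\ell_{13}\ell_{21}),\ \ell_{11}\ell_{22}-\ell_{12}\ell_{21},\ -z_2)$; $C_4=(a_{12}a_{23}-a_{13}a_{22},\ -(a_{12}\ell_{22}-a_{22}\ell_{12})-(a_{13}\ell_{23}-a_{23}\ell_{13})-z_1,\ a_{12}\ell_{21}-a_{22}\ell_{11},\ a_{13}\ell_{21}-a_{23}\ell_{11},\ -\psi_{23})$; $C_5=(-(a_{11}a_{23}-a_{13}a_{21}),\ a_{11}\ell_{22}-a_{21}\ell_{12},\ -(a_{11}\ell_{21}-a_{21}\ell_{11})-(a_{13}\ell_{23}-a_{23}\ell_{13})-z_1,\ a_{13}\ell_{22}-a_{23}\ell_{12},\ \psi_{13})$; $C_6=(a_{11}a_{22}-a_{12}a_{21},\ a_{11}\ell_{23}-a_{21}\ell_{13},\ a_{12}\ell_{23}-a_{22}\ell_{13},\ -(a_{11}\ell_{21}-a_{21}\ell_{11})-(a_{12}\ell_{22}-a_{22}\ell_{12})-z_1,\ -\psi_{12})$. $q_3$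 ($6\times2$), rows (column 1; column 2): $(a_{11}\ell_{11}+a_{12}\ell_{12}+a_{13}\ell_{13};\ a_{11}\ell_{21}+a_{12}\ell_{22}+a_{13}\ell_{23}+z_1)$, $(a_{21}\ell_{11}+a_{22}\ell_{12}+a_{23}\ell_{13}-z_1;\ a_{21}\ell_{21}+a_{22}\ell_{22}+a_{23}\ell_{23})$, $(-a_{11}\psi_{23}+a_{12}\psi_{13}-a_{13}\psi_{12};\ -a_{21}\psi_{23}+a_{22}\psi_{13}-a_{23}\psi_{12})$, $(-\ell_{12}\psi_{12}-\ell_{13}\psi_{13}+z_2a_{11};\ -\ell_{22}\psi_{12}-\ell_{23}\psi_{13}+z_2a_{21})$, $(\ell_{11}\psi_{12}-\ell_{13}\psi_{23}+z_2a_{12};\ \ell_{21}\psi_{12}-\ell_{23}\psi_{23}+z_2a_{22})$, $(\ell_{11}\psi_{13}+\ell_{12}\psi_{23}+z_2a_{13};\ \ell_{21}\psi_{13}+\ell_{22}\psi_{23}+z_2a_{23})$. The complex $\mathbb B$: $0\to R^2\xrightarrow{b_3}R^6\xrightarrow{b_2}R^5\xrightarrow{b_1}R$ (with $R=R_0[\mathbb B]$). Let $U=(u_{ij})$ ($2\times3$), $\Pi=(\pi_1,\pi_2,\pi_3)^{\rm T}$, $(U\Pi)_1,(U\Pi)_2$ the entries of $U\Pi$, and $\Delta_1=u_{12}u_{23}-u_{13}u_{22}$, $\Delta_2=-(u_{11}u_{23}-u_{13}u_{21})$, $\Delta_3=u_{11}u_{22}-u_{12}u_{21}$. $b_1=[(U\Pi)_1,\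 (U\Pi)_2,\ z_2\Delta_1-w_1\pi_1,\ z_2\Delta_2-w_1\pi_2,\ z_2\Delta_3-w_1\pi_3]$. $b_2$ ($5\times 6$), rows: $((U\Pi)_2,\ 0,\ -w_1,\ -z_2u_{21},\ -z_2u_{22},\ -z_2u_{23})$, $(-(U\Pi)_1,\ w_1,\ 0,\ z_2u_{11},\ z_2u_{12},\ z_2u_{13})$, $(0,\ u_{21},\ -u_{11},\ 0,\ -\pi_3,\ \pi_2)$, $(0,\ u_{22},\ -u_{12},\ \pi_3,\ 0,\ -\pi_1)$, $(0,\ u_{23},\ -u_{13},\ -\pi_2,\ \pi_1,\ 0)$. $b_3$ ($6\times 2$), rows: $(w_1, z_2)$, $((U\Pi)_1,0)$, $((U\Pi)_2,0)$, $(\Delta_1,\pi_1)$, $(\Delta_2,\pi_2)$, $(\Delta_3,\pi_3)$. An isomorphism of complexes means a family of isomorphisms of the modules in each degree commuting with the differentials. *)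

From HB Require Import structures.
From mathcomp Require Import all_boot all_order all_algebra.
From mathcomp Require Export mpoly.
Set Implicit Arguments. Unset Strict Implicit. Unset Printing Implicit Defensive.
Import GRing.Theory.
Local Open Scope ring_scope.

Definition is_ideal (R : comNzRingType) (I : R -> Prop) : Prop :=
  [/\ I 0, (forall x y, I x -> I y -> I (x + y)) & (forall r x, I x -> I (r * x))].

Definition noetherian (R : comNzRingType) : Prop :=
  forall I : nat -> R -> Prop,
    (forall n, is_ideal (I n)) ->
    (forall n x, I n x -> I n.+1 x) ->
    exists N, forall n, (N <= n)%N -> forall x, I n x -> I N x.

Definition mx_of_rows (T : nmodType) (m n : nat) (s : seq (seq T)) : 'M[T]_(m, n) :=
  \matrix_(i < m, j < n) nth 0 (nth [::] s i) j.

Section Complexes.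
Variable R0 : comNzRingType.

Definition RQ := {mpoly R0[17]}.
Definition QX (k : nat) : RQ := 'X_(inord k).
Definition qa (i j : nat) : RQ := QX (3 * i.-1 + j.-1).
Definition ql (i j : nat) : RQ := QX (6 + 3 * i.-1 + j.-1).
Definition psi12 : RQ := QX 12.
Definition psi13 : RQ := QX 13.
Definition psi23 : RQ := QX 14.
Definition qz1 : RQ := QX 15.
Definition qz2 : RQ := QX 16.

Definition det3 (T : comNzRingType) (x11 x12 x13 x21 x22 x23 x31 x32 x33 : T) : T :=
  x11 * (x22 * x33 - x23 * x32) - x12 * (x21 * x33 - x23 * x31)
  + x13 * (x21 * x32 - x22 * x31).

Definition QN : RQ := \sum_(i < 3) (qa 1 i.+1 * ql 2 i.+1 - qa 2 i.+1 * ql 1 i.+1).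
(* P = (psi23, -psi13, psi12)^T ; (A P)_k *)
Definition AP (k : nat) : RQ := qa k 1 * psi23 - qa k 2 * psi13 + qa k 3 * psi12.
Definition PtAt (x y : RQ) : RQ := AP 1 * x + AP 2 * y.
Definition ALt (i k : nat) : RQ := \sum_(j < 3) qa i j.+1 * ql k j.+1.

Definition g1 : RQ :=
  - det3 psi23 (- psi13) psi12 (ql 1 1) (ql 1 2) (ql 1 3) (ql 2 1) (ql 2 2) (ql 2 3)
  - qz2 * QN - qz2 * qz1.
Definition g2 : RQ := PtAt (ql 2 1) (- ql 1 1)
  - qz2 * (qa 1 2 * qa 2 3 - qa 1 3 * qa 2 2) + qz1 * psi23.
Definition g3 : RQ := PtAt (ql 2 2) (- ql 1 2)
  + qz2 * (qa 1 1 * qa 2 3 - qa 1 3 * qa 2 1) - qz1 * psi13.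
Definition g4 : RQ := PtAt (ql 2 3) (- ql 1 3)
  - qz2 * (qa 1 1 * qa 2 2 - qa 1 2 * qa 2 1) + qz1 * psi12.
Definition g5 : RQ := - (ALt 1 1 * ALt 2 2 - ALt 1 2 * ALt 2 1) - qz1 * QN - qz1 ^+ 2.

Definition q1 : 'M[RQ]_(1, 5) := mx_of_rows 1 5 [:: [:: g1; g2; g3; g4; g5]].

Definition qC1 : seq RQ :=
  [:: psi12 * qa 2 3 - psi13 * qa 2 2 + psi23 * qa 2 1;
      - ql 2 2 * psi12 - ql 2 3 * psi13 + qz2 * qa 2 1;
      ql 2 1 * psi12 - ql 2 3 * psi23 + qz2 * qa 2 2;
      ql 2 1 * psi13 + ql 2 2 * psi23 + qz2 * qa 2 3;
      0].
Definition qC2 : seq RQ :=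
  [:: - psi12 * qa 1 3 + psi13 * qa 1 2 - psi23 * qa 1 1;
      psi12 * ql 1 2 + psi13 * ql 1 3 - qz2 * qa 1 1;
      - psi12 * ql 1 1 + psi23 * ql 1 3 - qz2 * qa 1 2;
      - psi13 * ql 1 1 - psi23 * ql 1 2 - qz2 * qa 1 3;
      0].
Definition qC3 : seq RQ :=
  [:: qz1;
      ql 1 2 * ql 2 3 - ql 1 3 * ql 2 2;
      - (ql 1 1 * ql 2 3 - ql 1 3 * ql 2 1);
      ql 1 1 * ql 2 2 - ql 1 2 * ql 2 1;
      - qz2].
Definition qC4 : seq RQ :=
  [:: qa 1 2 * qa 2 3 - qa 1 3 * qa 2 2;
      - (qa 1 2 * ql 2 2 - qa 2 2 * ql 1 2) - (qa 1 3 * ql 2 3 - qa 2 3 * ql 1 3) - qz1;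
      qa 1 2 * ql 2 1 - qa 2 2 * ql 1 1;
      qa 1 3 * ql 2 1 - qa 2 3 * ql 1 1;
      - psi23].
Definition qC5 : seq RQ :=
  [:: - (qa 1 1 * qa 2 3 - qa 1 3 * qa 2 1);
      qa 1 1 * ql 2 2 - qa 2 1 * ql 1 2;
      - (qa 1 1 * ql 2 1 - qa 2 1 * ql 1 1) - (qa 1 3 * ql 2 3 - qa 2 3 * ql 1 3) - qz1;
      qa 1 3 * ql 2 2 - qa 2 3 * ql 1 2;
      psi13].
Definition qC6 : seq RQ :=
  [:: qa 1 1 * qa 2 2 - qa 1 2 * qa 2 1;
      qa 1 1 * ql 2 3 - qa 2 1 * ql 1 3;
      qa 1 2 * ql 2 3 - qa 2 2 * ql 1 3;
      - (qa 1 1 * ql 2 1 - qa 2 1 * ql 1 1) - (qa 1 2 * ql 2 2 - qa 2 2 * ql 1 2) - qz1;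
      - psi12].

Definition q2 : 'M[RQ]_(5, 6) :=
  (mx_of_rows 6 5 [:: qC1; qC2; qC3; qC4; qC5; qC6])^T.

Definition q3 : 'M[RQ]_(6, 2) := mx_of_rows 6 2
  [:: [:: qa 1 1 * ql 1 1 + qa 1 2 * ql 1 2 + qa 1 3 * ql 1 3;
          qa 1 1 * ql 2 1 + qa 1 2 * ql 2 2 + qa 1 3 * ql 2 3 + qz1];
      [:: qa 2 1 * ql 1 1 + qa 2 2 * ql 1 2 + qa 2 3 * ql 1 3 - qz1;
          qa 2 1 * ql 2 1 + qa 2 2 * ql 2 2 + qa 2 3 * ql 2 3];
      [:: - qa 1 1 * psi23 + qa 1 2 * psi13 - qa 1 3 * psi12;
          - qa 2 1 * psi23 + qa 2 2 * psi13 - qa 2 3 * psi12];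
      [:: - ql 1 2 * psi12 - ql 1 3 * psi13 + qz2 * qa 1 1;
          - ql 2 2 * psi12 - ql 2 3 * psi13 + qz2 * qa 2 1];
      [:: ql 1 1 * psi12 - ql 1 3 * psi23 + qz2 * qa 1 2;
          ql 2 1 * psi12 - ql 2 3 * psi23 + qz2 * qa 2 2];
      [:: ql 1 1 * psi13 + ql 1 2 * psi23 + qz2 * qa 1 3;
          ql 2 1 * psi13 + ql 2 2 * psi23 + qz2 * qa 2 3]].

Definition RB := {mpoly R0[11]}.
Definition BX (k : nat) : RB := 'X_(inord k).
Definition bu (i j : nat) : RB := BX (3 * i.-1 + j.-1).
Definition bpi (i : nat) : RB := BX (5 + i).
Definition bw1 : RB := BX 9.
Definition bz2 : RB := BX 10.

Definition UPi (k : nat) : RB := bu k 1 * bpi 1 + bu k 2 * bpi 2 + bu k 3 * bpi 3.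
Definition Delta1 : RB := bu 1 2 * bu 2 3 - bu 1 3 * bu 2 2.
Definition Delta2 : RB := - (bu 1 1 * bu 2 3 - bu 1 3 * bu 2 1).
Definition Delta3 : RB := bu 1 1 * bu 2 2 - bu 1 2 * bu 2 1.

Definition b1 : 'M[RB]_(1, 5) := mx_of_rows 1 5
  [:: [:: UPi 1; UPi 2; bz2 * Delta1 - bw1 * bpi 1; bz2 * Delta2 - bw1 * bpi 2;
          bz2 * Delta3 - bw1 * bpi 3]].

Definition b2 : 'M[RB]_(5, 6) := mx_of_rows 5 6
  [:: [:: UPi 2; 0; - bw1; - bz2 * bu 2 1; - bz2 * bu 2 2; - bz2 * bu 2 3];
      [:: - UPi 1; bw1; 0; bz2 * bu 1 1; bz2 * bu 1 2; bz2 * bu 1 3];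
      [:: 0; bu 2 1; - bu 1 1; 0; - bpi 3; bpi 2];
      [:: 0; bu 2 2; - bu 1 2; bpi 3; 0; - bpi 1];
      [:: 0; bu 2 3; - bu 1 3; - bpi 2; bpi 1; 0]].

Definition b3 : 'M[RB]_(6, 2) := mx_of_rows 6 2
  [:: [:: bw1; bz2]; [:: UPi 1; 0]; [:: UPi 2; 0];
      [:: Delta1; bpi 1]; [:: Delta2; bpi 2]; [:: Delta3; bpi 3]].

End Complexes.

Definition invertible_mx (T : comNzRingType) (n : nat) (M : 'M[T]_n) : Prop :=
  exists N : 'M[T]_n, M *m N = 1%:M /\ N *m M = 1%:M.

(* Isomorphism of two length-3 complexes 0 -> T^2 -d3-> T^6 -d2-> T^5 -d1-> T
   (differentials acting on column vectors): invertible matrices in each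
   degree commuting with the differentials. *)
Definition complex_iso (T : comNzRingType)
  (d1 : 'M[T]_(1, 5)) (d2 : 'M[T]_(5, 6)) (d3 : 'M[T]_(6, 2))
  (e1 : 'M[T]_(1, 5)) (e2 : 'M[T]_(5, 6)) (e3 : 'M[T]_(6, 2)) : Prop :=
  exists (f0 : 'M[T]_1) (f1 : 'M[T]_5) (f2 : 'M[T]_6) (f3 : 'M[T]_2),
    [/\ invertible_mx f0, invertible_mx f1, invertible_mx f2 & invertible_mx f3] /\
    [/\ f0 *m d1 = e1 *m f1, f1 *m d2 = e2 *m f2 & f2 *m d3 = e3 *m f3].

From mathcomp Require Import all_boot all_order all_algebra.
From mathcomp Require Import mpoly ring.
Local Open Scope ring_scope.
Import GRing.Theory.

(* Phi kills a21, a22, l13, l21, l22, sends l23 to 1 and a13 to pi3 - w1, and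
   sends the ten other variables to variables of R0[B] up to sign, so it has an
   explicit section and is onto.  After this specialization each differential
   of Q is conjugate to the corresponding one of B: by the identity in degree
   0, a signed permutation in degree 1, a signed permutation with two extra
   entries -u13, -u23 in degree 2 and diag(1, -1) in degree 3.  Each
   conjugation is a polynomial identity, checked entry by entry. *)

Section Substitution.
Variable R : comNzRingType.

Lemma comp_mpolyA k m n (p : {mpoly R[k]}) (lp : k.-tuple {mpoly R[m]})
    (lq : m.-tuple {mpoly R[n]}) :
  (p \mPo lp) \mPo lq = p \mPo [tuple tnth lp i \mPo lq | i < k].
Proof.
rewrite [p \mPo lp]comp_mpolyEX [RHS]comp_mpolyEX raddf_sum.
apply: eq_bigr => mon _; rewrite /= comp_mpolyZ !comp_mpolyX rmorph_prod.
by congr (_ *: _); apply: eq_bigr => i _; rewrite rmorphXn tnth_mktuple.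
Qed.

Lemma comp_mpolyK m n (lq : m.-tuple {mpoly R[n]}) (lp : n.-tuple {mpoly R[m]}) :
  (forall i, tnth lp i \mPo lq = 'X_i) -> cancel (comp_mpoly lp) (comp_mpoly lq).
Proof.
move=> lpK q; rewrite comp_mpolyA -[RHS]comp_mpoly_id; congr comp_mpoly.
by apply: eq_mktuple => i; rewrite lpK.
Qed.

End Substitution.

Section Specialization.
Variable R0 : comNzRingType.
Local Notation u := (bu R0).
Local Notation pi := (bpi R0).
Local Notation w1 := (bw1 R0).
Local Notation z2 := (bz2 R0).

Definition specialization : 17.-tuple (RB R0) :=
  [tuple u 1 1; u 1 2; pi 3 - w1; 0; 0; z2;
         - u 2 2; u 2 1; 0; 0; 0; 1;
         u 1 3; - pi 2; pi 1; w1; u 2 3].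

Definition Phi : {rmorphism RQ R0 -> RB R0} := comp_mpoly specialization.

Lemma PhiC c : Phi c%:MP = c%:MP.
Proof. exact: comp_mpolyC. Qed.

Lemma Phi_QX k : (k < 17)%N -> Phi (QX R0 k) = specialization`_k.
Proof. by move=> lt_k17; rewrite /QX /= comp_mpolyXU inordK. Qed.

Lemma Phi_var :
  (Phi (qa R0 1 1) = u 1 1) * (Phi (qa R0 1 2) = u 1 2) * (Phi (qa R0 1 3) = pi 3 - w1)
  * (Phi (qa R0 2 1) = 0) * (Phi (qa R0 2 2) = 0) * (Phi (qa R0 2 3) = z2)
  * (Phi (ql R0 1 1) = - u 2 2) * (Phi (ql R0 1 2) = u 2 1) * (Phi (ql R0 1 3) = 0)
  * (Phi (ql R0 2 1) = 0) * (Phi (ql R0 2 2) = 0) * (Phi (ql R0 2 3) = 1)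
  * (Phi (psi12 R0) = u 1 3) * (Phi (psi13 R0) = - pi 2) * (Phi (psi23 R0) = pi 1)
  * (Phi (qz1 R0) = w1) * (Phi (qz2 R0) = u 2 3).
Proof. by rewrite /qa /ql /psi12 /psi13 /psi23 /qz1 /qz2 !Phi_QX. Qed.

(* Keeps simpl, which evaluates matrix entries below, from unfolding Phi. *)
Opaque Phi.

Definition Phi_section : 11.-tuple (RQ R0) :=
  [tuple qa R0 1 1; qa R0 1 2; psi12 R0; ql R0 1 2; - ql R0 1 1; qz2 R0;
         psi23 R0; - psi13 R0; qa R0 1 3 + qz1 R0; qz1 R0; qa R0 2 3].

Lemma Phi_section_var i : Phi (tnth Phi_section i) = 'X_i.
Proof.
have -> : 'X_i = BX R0 i by rewrite /BX inord_val.
rewrite (tnth_nth 0); case: i => -[|[|[|[|[|[|[|[|[|[|[|?]]]]]]]]]]] ? //=.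
all: by rewrite ?rmorphN ?rmorphD !Phi_var ?opprK ?subrK.
Qed.

Lemma PhiK : cancel (comp_mpoly Phi_section) Phi.
Proof. exact: comp_mpolyK Phi_section_var. Qed.

Definition iso1 : 'M[RB R0]_5 := mx_of_rows 5 5
  [:: [:: 0; 0; 0; 1; 0];
      [:: -1; 0; 0; 0; 0];
      [:: 0; -1; 0; 0; 0];
      [:: 0; 0; -1; 0; 0];
      [:: 0; 0; 0; 0; 1]].

Definition iso2 : 'M[RB R0]_6 := mx_of_rows 6 6
  [:: [:: 0; -1; 0; 0; 0; 0];
      [:: 0; - u 1 3; -1; 0; 0; 0];
      [:: 0; - u 2 3; 0; 0; 0; 1];
      [:: 0; 0; 0; 0; 1; 0];
      [:: 0; 0; 0; -1; 0; 0];
      [:: -1; 0; 0; 0; 0; 0]].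

Definition iso2_inv : 'M[RB R0]_6 := mx_of_rows 6 6
  [:: [:: 0; 0; 0; 0; 0; -1];
      [:: -1; 0; 0; 0; 0; 0];
      [:: u 1 3; -1; 0; 0; 0; 0];
      [:: 0; 0; 0; 0; -1; 0];
      [:: 0; 0; 0; 1; 0; 0];
      [:: - u 2 3; 0; 1; 0; 0; 0]].

Definition iso3 : 'M[RB R0]_2 := mx_of_rows 2 2 [:: [:: 1; 0]; [:: 0; -1]].

Ltac entrywise :=
  apply/matrixP; intros i j; rewrite !mxE ?big_ord_recr ?big_ord0 /= ?mxE;
  revert i j => -[[|[|[|[|[|[|?]]]]]] ?] // -[[|[|[|[|[|[|?]]]]]] ?] //=.

(* Dropping the zero products first leaves far fewer Phi-terms to push. *)
Ltac push_Phi :=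
  rewrite ?(mul0r, mulr0, add0r, addr0, mul1r, mulr1);
  rewrite ?(rmorphM Phi, rmorphN Phi, rmorphB Phi, rmorphD Phi, rmorph1 Phi, rmorph0 Phi);
  rewrite ?Phi_var /UPi /Delta1 /Delta2 /Delta3.

Lemma iso1K : iso1 *m iso1^T = 1%:M.
Proof. entrywise; ring. Qed.

Lemma iso1_trK : iso1^T *m iso1 = 1%:M.
Proof. entrywise; ring. Qed.

Lemma iso2K : iso2 *m iso2_inv = 1%:M.
Proof. entrywise; ring. Qed.

Lemma iso2_invK : iso2_inv *m iso2 = 1%:M.
Proof. entrywise; ring. Qed.

Lemma iso3K : iso3 *m iso3 = 1%:M.
Proof. entrywise; ring. Qed.

Lemma Phi_q1 : map_mx Phi (q1 R0) = b1 R0 *m iso1.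
Proof.
entrywise; rewrite /g1 /g2 /g3 /g4 /g5 /QN /ALt /PtAt /AP /det3 ?big_ord_recr ?big_ord0 /=.
all: push_Phi; ring.
Qed.

Lemma Phi_q2 : iso1 *m map_mx Phi (q2 R0) = b2 R0 *m iso2.
Proof. entrywise; push_Phi; ring. Qed.

Lemma Phi_q3 : iso2 *m map_mx Phi (q3 R0) = b3 R0 *m iso3.
Proof. entrywise; push_Phi; ring. Qed.

Lemma Phi_complex_iso :
  complex_iso (map_mx Phi (q1 R0)) (map_mx Phi (q2 R0)) (map_mx Phi (q3 R0))
              (b1 R0) (b2 R0) (b3 R0).
Proof.
exists 1%:M, iso1, iso2, iso3; split; last by rewrite mul1mx Phi_q1 Phi_q2 Phi_q3.
split; first by exists 1%:M; rewrite mul1mx.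
- by exists iso1^T; rewrite iso1K iso1_trK.
- by exists iso2_inv; rewrite iso2K iso2_invK.
- by exists iso3; rewrite iso3K.
Qed.

End Specialization.

Theorem theorem5p10 (R0 : comNzRingType) (HR0 : noetherian R0) :
  exists Phi : {rmorphism RQ R0 -> RB R0},
    [/\ (forall c : R0, Phi c%:MP = c%:MP),
        (forall y : RB R0, exists x : RQ R0, Phi x = y) &
        complex_iso (map_mx Phi (q1 R0)) (map_mx Phi (q2 R0)) (map_mx Phi (q3 R0))
                    (b1 R0) (b2 R0) (b3 R0)].
Proof.
exists (Phi R0); split; [exact: PhiC | | exact: Phi_complex_iso].
by move=> y; exists (comp_mpoly (Phi_section R0) y); rewrite PhiK.
Qed.
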